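(* For all $\alpha\in(0,1]$ and $D>0$ there exists $M(\alpha,D)>0$ such that, with $n_0:=4K(d+1)/\alpha$: for all $n\ge n_0$, all $\theta\in\Theta$, all $x\in[K^\theta]$ and all $x^*\in[K^*]$, if $|I_{n,D}(x,x^*,\theta)|\ge n\alpha/K$ then $\sup_{t\in[0,n]}|T^*_{x^*}(t)-T^\theta_x(t)|\le M(\alpha,D)$.
   Context: Fix integers $K\ge1$, $d\ge1$, $\sigma_-\in(0,1)$; $[K']=\{1,\dots,K'\}$; $\Delta_{K'}$ = probability vectors on $[K']$; $\Sigma^{\sigma_-}_{K'}$ = $K'\times K'$ stochastic matrices with all entries $\ge\sigma_-$; $\mathbb R_d[X]$ = real polynomials of degree $\le d$ on $\mathbb R_+$; $\Gamma$ a set of probability densities on $\mathbb R$. $\Theta=\bigcup_{K'=1}^K\{[K']\}\times\Delta_{K'}\times\Sigma^{\sigma_-}_{K'}\times\Gamma^{K'}\times(\mathbb R_d[X])^{K'}$, elements $\theta=(K^\theta,\pi^\theta,Q^\theta,\gamma^\theta,T^\theta)$ with trends $T^\theta_x\in\mathbb R_d[X]$; $\theta^*=(K^*,\pi^*,Q^*,\gamma^*,T^* )\in\Theta$ is a fixed (true) parameter. For $n\in\mathbb N^*$, $D>0$: $I_{n,D}(x,x^*,\theta)=\{t\in\{1,\dots,n\}:|T^*_{x^*}(t)-T^\theta_x(t)|\le D\}$. *)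

From HB Require Import structures.
From mathcomp Require Import all_boot all_order all_algebra.
From mathcomp Require Import all_classical all_reals all_analysis.
Set Implicit Arguments. Unset Strict Implicit. Unset Printing Implicit Defensive.
Import Order.TTheory GRing.Theory Num.Theory.
Local Open Scope ring_scope.

Definition is_density (R : realType) (g : R -> R) : Prop :=
  measurable_fun setT g /\ (forall x, 0 <= g x) /\
  (\int[@lebesgue_measure R]_x (g x)%:E = 1)%E.

(* An element theta = (K^theta, pi, Q, gamma, T) of the big union Theta;
   the state space [K'] = {1..K'} is represented by 'I_K' = {0..K'-1}. *)
Record param (R : realType) := Param {
  pK : nat;
  ppi : 'I_pK -> R;
  pQ : 'I_pK -> 'I_pK -> R;
  pgamma : 'I_pK -> (R -> R);
  pT : 'I_pK -> {poly R} }.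

Arguments ppi {R} p _.
Arguments pQ {R} p _ _.
Arguments pgamma {R} p _.
Arguments pT {R} p _.

Definition in_Theta (R : realType) (K d : nat) (sigma : R) (Gamma : set (R -> R))
  (th : param R) : Prop :=
  [/\ ((1 <= pK th)%N /\ (pK th <= K)%N),
      ((forall x, 0 <= ppi th x) /\ \sum_x ppi th x = 1),
      ((forall x y, sigma <= pQ th x y) /\ (forall x, \sum_y pQ th x y = 1)),
      (forall x, Gamma (pgamma th x)) &
      (forall x, (size (pT th x) <= d.+1)%N)].

Definition I_set (R : realType) (n : nat) (D : R) (Ts T : {poly R}) : seq nat :=
  [seq t <- iota 1 n | `|Ts.[t%:R] - T.[t%:R]| <= D].

From HB Require Import structures.
From mathcomp Require Import all_boot all_order all_algebra.
From mathcomp Require Import all_classical all_reals all_analysis.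
From mathcomp Require Import zify ring lra.
Import Order.TTheory GRing.Theory Num.Theory.

(* The difference p of the two trends is a polynomial of degree at most d that
   is bounded by D at N >= n alpha / K integer points of [1, n].  Taking every
   k-th of these points, k = N / (d+1), gives d+1 nodes at mutual distance at
   least k, and Lagrange interpolation at these nodes bounds |p| on [0, n] by
   (d+1) D (n / k)^d.  Since N < 2 k (d+1), the ratio n / k is at most
   2 K (d+1) / alpha, independently of n and theta. *)

Lemma nth_sorted_ltn_gap (s : seq nat) i j : sorted ltn s -> i <= j < size s ->
  nth 0 s i + (j - i) <= nth 0 s j.
Proof.
move=> ss; elim: j => [|j IH] /andP[hij hjs].
  by move: hij; rewrite leqn0 => /eqP->; rewrite addn0.
case: (ltngtP i j.+1) hij => // [hlt _|-> _]; last by rewrite subnn addn0.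
have := IH; rewrite (ltnW hjs) andbT -ltnS => /(_ hlt).
have := @sorted_ltn_nth _ ltn ltn_trans 0 s ss j j.+1.
rewrite !inE hjs (ltnW hjs) => /(_ isT isT (ltnSn j)); lia.
Qed.

Lemma nth_sorted_ltn_mul_gap (s : seq nat) k i j : sorted ltn s -> i < j ->
  j * k < size s -> nth 0 s (i * k) + k <= nth 0 s (j * k).
Proof.
move=> ss ij jk; have ijk : i * k + k <= j * k by rewrite -mulSnr leq_mul2r ij orbT.
have := @nth_sorted_ltn_gap s (i * k) (j * k) ss; rewrite jk andbT.
move=> /(_ (leq_trans (leq_addr _ _) ijk)); lia.
Qed.

Lemma leq_divn_double (N m : nat) : m.+1 <= N -> N <= 2 * (N %/ m.+1) * m.+1.
Proof.
move=> mN; have k1 : 0 < N %/ m.+1 by rewrite divn_gt0.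
have := ltn_ceil N (ltn0Sn m); nia.
Qed.

Local Open Scope ring_scope.

Lemma injective_extension (R : realDomainType) (d : nat) (x : nat -> R) :
  (forall i j, (i < j <= d)%N -> x i != x j) ->
  exists2 y : nat -> R, injective y & forall i, (i <= d)%N -> y i = x i.
Proof.
move=> xneq; set B := \sum_(j < d.+1) `|x j|.
exists (fun i => if (i <= d)%N then x i else B + i%:R); last by move=> i ->.
have far m j : (d < m)%N -> (j <= d)%N -> x j < B + m%:R.
  move=> dm jd; rewrite /B (bigD1 (Ordinal (jd : j < d.+1)%N)) //= -addrA.
  apply: le_lt_trans (ler_norm _) _; rewrite ltrDl ltr_wpDl ?sumr_ge0 //.
  by rewrite ltr0n (leq_ltn_trans (leq0n j) (leq_ltn_trans jd dm)).
move=> i j /=; case: (leqP i d) => id; case: (leqP j d) => jd.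
- move=> /eqP; apply: contraTeq; case: (ltngtP i j) => // [ij|ji] _.
    by apply: xneq; rewrite ij.
  by rewrite eq_sym; apply: xneq; rewrite ji.
- by move=> xij; have := far j i jd id; rewrite xij ltxx.
- by move=> xij; have := far i j id jd; rewrite xij ltxx.
- by move/addrI/eqP; rewrite eqr_nat => /eqP.
Qed.

Lemma lagrange_norm_bound (R : realFieldType) (d : nat) (p : {poly R})
  (x : nat -> R) (h L D t : R) :
  (size p <= d.+1)%N -> 0 < h ->
  (forall i j, (i < j <= d)%N -> h <= `|x i - x j|) ->
  (forall i, (i <= d)%N -> `|p.[x i]| <= D) ->
  (forall i, (i <= d)%N -> `|t - x i| <= L) ->
  `|p.[t]| <= d.+1%:R * D * (L / h) ^+ d.
Proof.
move=> hp h0 xsep pD tL.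
have sep (i j : 'I_d.+1) : i != j -> h <= `|x i - x j|.
  move=> ij; case: (ltngtP i j) => [lt|gt|eq].
  - by apply: xsep; rewrite lt -ltnS ltn_ord.
  - by rewrite distrC; apply: xsep; rewrite gt -ltnS ltn_ord.
  - by move: ij; rewrite -val_eqE /= eq eqxx.
(* [lagrange_gen] wants nodes [nat -> R] injective on all of [nat]. *)
have [y yinj yx] : exists2 y : nat -> R, injective y & forall i, (i <= d)%N -> y i = x i.
  apply: injective_extension => i j ijd; rewrite -subr_eq0 -normr_gt0.
  exact: lt_le_trans h0 (xsep i j ijd).
have yxo (i : 'I_d.+1) : y i = x i by rewrite yx // -ltnS.
have D0 : 0 <= D by apply: le_trans (pD 0%N (leq0n _)).
rewrite {1}(lagrange_gen (ltn0Sn d) yinj hp) horner_sum.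
apply: le_trans (ler_norm_sum _ _ _) _.
rewrite -[d.+1 in X in X%:R]card_ord -sumr_const !mulr_suml.
apply: ler_sum => i _; rewrite mul1r hornerM hornerC normrM yxo.
apply: ler_pM => //; first by rewrite pD // -ltnS.
rewrite lagrangeE //= hornerM hornerC !horner_prod normrM normfV !normr_prod.
have -> : (L / h) ^+ d = \prod_(j < d.+1 | j != i) (L / h).
  by rewrite prodr_const cardC1 card_ord.
rewrite mulrC -prodf_div; apply: ler_prod => j ji; rewrite !hornerXsubC !yxo.
have hij : h <= `|x i - x j| by apply: sep; rewrite eq_sym.
rewrite divr_ge0 //= ler_pM ?invr_ge0 ?lef_pV2 ?posrE ?(lt_le_trans h0) //.
by rewrite tL // -ltnS.
Qed.

Lemma poly_norm_bound_sorted_nodes (R : realFieldType) (d n : nat)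
  (p : {poly R}) (s : seq nat) (D t : R) :
  (size p <= d.+1)%N -> sorted ltn s -> (d.+1 <= size s)%N ->
  (forall m, m \in s -> m <= n)%N ->
  (forall m, m \in s -> `|p.[m%:R]| <= D) ->
  0 <= t <= n%:R ->
  `|p.[t]| <= d.+1%:R * D * (n%:R / (size s %/ d.+1)%:R) ^+ d.
Proof.
move=> hp ss ds sn pD /andP[t0 tn]; set k := (size s %/ d.+1)%N.
have k0 : (0 < k)%N by rewrite divn_gt0.
have ikN i : (i <= d)%N -> (i * k < size s)%N.
  move=> id; apply: leq_trans (leq_trunc_div _ d.+1); rewrite mulnC ltn_mul2l k0.
  by rewrite ltnS.
have nodes i : (i <= d)%N -> nth 0%N s (i * k) \in s by move/ikN/mem_nth.
apply: (@lagrange_norm_bound _ _ _ (fun i => (nth 0%N s (i * k))%:R)) => //.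
- by rewrite ltr0n.
- move=> i j /andP[ij jd]; rewrite distrC ler_normr lerBrDr -natrD ler_nat.
  by rewrite addnC nth_sorted_ltn_mul_gap ?ikN.
- by move=> i /nodes /pD.
- move=> i /nodes /sn; rewrite -(ler_nat R) => xn.
  have x0 := ler0n R (nth 0%N s (i * k)).
  by rewrite ler_norml; apply/andP; split; lra.
Qed.

Lemma ler_div_divn_count (R : realFieldType) (K N n m : nat) (alpha : R) :
  0 < alpha -> (0 < K)%N -> (m.+1 <= N)%N -> n%:R * alpha / K%:R <= N%:R ->
  n%:R / (N %/ m.+1)%:R <= 2 * K%:R * m.+1%:R / alpha.
Proof.
move=> a0 K0 mN nN; have k0 : 0 < (N %/ m.+1)%:R :> R by rewrite ltr0n divn_gt0.
have : n%:R * alpha / K%:R <= (2 * (N %/ m.+1) * m.+1)%:R :> R.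
  by apply: le_trans nN _; rewrite ler_nat leq_divn_double.
rewrite ler_pdivrMr ?ltr0n // -ler_pdivlMr // ler_pdivrMr // => /le_trans; apply.
by rewrite !natrM le_eqVlt; apply/orP; left; apply/eqP; ring.
Qed.

Lemma sorted_I_set (R : realType) n (D : R) Ts T : sorted ltn (I_set n D Ts T).
Proof. exact/sorted_filter/iota_ltn_sorted/ltn_trans. Qed.

Lemma mem_I_set (R : realType) n (D : R) Ts T m :
  (m \in I_set n D Ts T) = [&& (0 < m <= n)%N & `|Ts.[m%:R] - T.[m%:R]| <= D].
Proof. by rewrite mem_filter mem_iota andbC add1n ltnS. Qed.

Theorem proposition10 (R : realType) (K d : nat) (sigma : R)
  (Gamma : set (R -> R)) (ths : param R) :
  (1 <= K)%N -> (1 <= d)%N -> 0 < sigma < 1 ->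
  (forall g, Gamma g -> is_density g) ->
  in_Theta K d sigma Gamma ths ->
  forall alpha D : R, 0 < alpha <= 1 -> 0 < D ->
  exists M : R, 0 < M /\
    forall (n : nat) (th : param R) (x : 'I_(pK th)) (xs : 'I_(pK ths)),
      4 * K%:R * (d.+1)%:R / alpha <= n%:R ->
      in_Theta K d sigma Gamma th ->
      n%:R * alpha / K%:R <= (size (I_set n D (pT ths xs) (pT th x)))%:R ->
      forall t : R, 0 <= t <= n%:R ->
        `|(pT ths xs).[t] - (pT th x).[t]| <= M.
Proof.
move=> K1 _ _ _ [_ _ _ _ size_ths] alpha D /andP[a0 _] D0.
have K0 : 0 < K%:R :> R by rewrite ltr0n.
set C : R := 2 * K%:R * d.+1%:R / alpha.
have C0 : 0 < C by rewrite divr_gt0 // !mulr_gt0.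
exists (d.+1%:R * D * C ^+ d); split; first by rewrite !mulr_gt0 // exprn_gt0.
move=> n th x xs n_large [_ _ _ _ size_th]; set s := I_set _ _ _ _ => s_large t t0n.
have size_p : (size (pT ths xs - pT th x)%R <= d.+1)%N.
  by apply: leq_trans (size_polyD _ _) _; rewrite size_polyN geq_max size_ths size_th.
have s_large_nat : (4 * d.+1 <= size s)%N.
  rewrite -(ler_nat R) natrM; apply: le_trans s_large; rewrite ler_pdivlMr //.
  by rewrite mulrAC -ler_pdivrMr.
have ds : (d.+1 <= size s)%N by rewrite (leq_trans _ s_large_nat) // leq_pmull.
rewrite -hornerN -hornerD.
apply: le_trans (poly_norm_bound_sorted_nodes _ _ _ _ _ D _ size_p
  (sorted_I_set _ _ _ _ _) ds _ _ t0n) _.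
- by move=> m; rewrite mem_I_set => /andP[/andP[_ ->]].
- by move=> m; rewrite mem_I_set hornerD hornerN => /andP[_].
apply: ler_wpM2l; first by rewrite mulr_ge0 ?ltW.
apply: lerXn2r; rewrite ?nnegrE ?divr_ge0 ?(ltW C0) ?(ltW a0) //.
exact: ler_div_divn_count.
Qed.
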